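(* Let $H$ be the orthocenter of $T=P_1P_2P_3$. For each $i$, with $\{i,j,k\}=\{1,2,3\}$: the perpendicular from $P_i$ to the line $P_j'P_k'$ passes through $-M$ (the reflection of $M$ in $O$), and the perpendicular from $P_i'$ to the line $P_jP_k$ passes through $2H-M$ (the reflection of $M$ in $H$). Hence $T$ and $T'=P_1'P_2'P_3'$ are orthologic with orthology centers $-M$ and $2H-M$.
   Context: Let $a>b>0$ and $c>0$ with $c^2=a^2-b^2$. Let $\mathcal{E}$ be the ellipse $x^2/a^2+y^2/b^2=1$ with center $O=(0,0)$, parametrized by $P(t)=(a\cos t,b\sin t)$. Fix $u\in\mathbb{R}$, let $M=(a\cos u,b\sin u)$ and $\Delta_u(t)=(x_u(t),y_u(t))$, where $x_u(t)=\frac1a\big(c^2(1+\cos(t+u))\cos t-a^2\cos u\big)$ and $y_u(t)=\frac1b\big(c^2\cos t\sin(t+u)-c^2\sin t-a^2\sin u\big)$ (the negative pedal curve of $\mathcal{E}$ with respect to $M$). For $i=1,2,3$ let $t_i=-u/3-2\pi(i-1)/3$, $P_i=P(t_i)$, $P_i'=\Delta_u(t_i)$ (the cusps). Two triangles $ABC$, $DEF$ are orthologic if the perpendiculars from $A,B,C$ to $EF,FD,DE$ respectively are concurrent; the concurrence points of these perpendiculars and of the perpendiculars from $D,E,F$ to $BC,CA,AB$ are the orthology centers. *)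

From Stdlib Require Import Reals.
Open Scope R_scope.

Definition pt := (R * R)%type.
Definition padd (p q : pt) : pt := (fst p + fst q, snd p + snd q).
Definition psub (p q : pt) : pt := (fst p - fst q, snd p - snd q).
Definition pscale (k : R) (p : pt) : pt := (k * fst p, k * snd p).
Definition pdot (p q : pt) : R := fst p * fst q + snd p * snd q.

Definition perp_through (A B C X : pt) : Prop := pdot (psub X A) (psub C B) = 0.

Definition is_orthocenter (A B C H : pt) : Prop :=
  perp_through A B C H /\ perp_through B C A H /\ perp_through C A B H.

Definition orthology_center (A B C D E F X : pt) : Prop :=
  perp_through A E F X /\ perp_through B F D X /\ perp_through C D E X.

Definition orthologic_with_centers (A B C D E F X Y : pt) : Prop :=
  orthology_center A B C D E F X /\ orthology_center D E F A B C Y.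

Definition ellP (a b t : R) : pt := (a * cos t, b * sin t).

Definition negPedal (a b c u t : R) : pt :=
  ((c ^ 2 * (1 + cos (t + u)) * cos t - a ^ 2 * cos u) / a,
   (c ^ 2 * cos t * sin (t + u) - c ^ 2 * sin t - a ^ 2 * sin u) / b).

Definition tcusp (u : R) (i : nat) : R := - u / 3 - 2 * PI * INR (i - 1) / 3.

From Stdlib Require Import Reals Lra.
Open Scope R_scope.

(* Proof idea.  Write s = -u/3, so that the cusp parameters t_i = s - 2 pi (i-1)/3
   satisfy 3 t_i + u = 0 (mod 2 pi).  Two facts make everything elementary:

   - At such a "cusp angle" t the negative pedal point is affine in
     (cos t, - sin t):  Delta_u(t) = ((3c^2 cos t + (c^2-2a^2) cos u)/(2a),
                                     (-3c^2 sin t + (c^2-2a^2) sin u)/(2b)).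
     Hence a chord of cusps is the image of the corresponding chord of E
     under the diagonal map (x,y) -> (3c^2 x/(2a^2), -3c^2 y/(2b^2)).
   - For every {i,j,k} = {1,2,3}, t_j + t_k = 2 t_i (mod 2 pi), so the chord
     P(t_k) - P(t_j) is (-2a sin t_i, 2b cos t_i) sin(t_k - t_i).

   With these, each perpendicularity reduces to sin(t+u) + sin(2t) = 0, which
   again holds at a cusp angle; the second family additionally uses that H is
   on the altitude from P_i and that c^2 = a^2 - b^2.  The theorem is then six
   instances of two lemmas, plus bookkeeping for the orthology statement. *)

(* An angle is a full turn when it is an integer multiple of 2 pi. *)
Definition full_turn (x : R) : Prop := cos x = 1.

Lemma full_turn_sin (x : R) : full_turn x -> sin x = 0.
Proof.
  unfold full_turn; intros hx.
  apply Rsqr_0_uniq.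
  pose proof (sin2_cos2 x) as hp; rewrite hx in hp; unfold Rsqr in *; lra.
Qed.

Lemma full_turn_reflect (x y : R) :
  full_turn x -> cos (x - y) = cos y /\ sin (x - y) = - sin y.
Proof.
  intros hx; pose proof (full_turn_sin x hx) as hs; unfold full_turn in hx.
  rewrite cos_minus, sin_minus, hx, hs; split; ring.
Qed.

Lemma full_turn_multiple (n : nat) : full_turn (2 * INR n * PI).
Proof.
  unfold full_turn.
  replace (2 * INR n * PI) with (0 + 2 * INR n * PI) by ring.
  rewrite cos_period; exact cos_0.
Qed.

Lemma full_turn_opp (x : R) : full_turn x -> full_turn (- x).
Proof. unfold full_turn; rewrite cos_neg; trivial. Qed.

Definition cusp_angle (u t : R) : Prop := full_turn (3 * t + u).

Lemma tcusp_cusp_angle (u : R) (i : nat) : cusp_angle u (tcusp u i).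
Proof.
  unfold cusp_angle, tcusp.
  replace (3 * (- u / 3 - 2 * PI * INR (i - 1) / 3) + u)
    with (- (2 * INR (i - 1) * PI)) by field.
  apply full_turn_opp, full_turn_multiple.
Qed.

(* The relation sin(t+u) = - sin(2t) on which both perpendicularities rest. *)
Lemma cusp_angle_sin (u t : R) :
  cusp_angle u t -> sin t * cos u + cos t * sin u + 2 * sin t * cos t = 0.
Proof.
  intros ht; destruct (full_turn_reflect _ (2 * t) ht) as [_ hs].
  replace (3 * t + u - 2 * t) with (t + u) in hs by ring.
  rewrite sin_plus in hs; rewrite hs, sin_2a; ring.
Qed.

(* At a cusp angle the negative pedal point is affine in (cos t, - sin t):
   product-to-sum turns 2 cos t cos(t+u), 2 cos t sin(t+u) into functions of
   u and 2t+u, and 2t+u = -t (mod 2 pi). *)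
Lemma negPedal_at_cusp (a b c u t : R) :
  a <> 0 -> b <> 0 -> cusp_angle u t ->
  negPedal a b c u t =
    ((3 * c ^ 2 * cos t + (c ^ 2 - 2 * a ^ 2) * cos u) / (2 * a),
     (- 3 * c ^ 2 * sin t + (c ^ 2 - 2 * a ^ 2) * sin u) / (2 * b)).
Proof.
  intros ha hb ht; destruct (full_turn_reflect _ t ht) as [hc hs].
  replace (3 * t + u - t) with (t + (t + u)) in hc, hs by ring.
  rewrite cos_plus in hc; rewrite sin_plus in hs.
  assert (hcu : cos u = cos t * cos (t + u) + sin t * sin (t + u)).
  { replace u with ((t + u) - t) at 1 by ring; rewrite cos_minus; ring. }
  assert (hsu : sin u = cos t * sin (t + u) - sin t * cos (t + u)).
  { replace u with ((t + u) - t) at 1 by ring; rewrite sin_minus; ring. }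
  unfold negPedal; f_equal; apply Rminus_diag_uniq.
  - rewrite hcu.
    transitivity (c ^ 2 / (2 * a) * (cos t * cos (t + u) - sin t * sin (t + u) - cos t)).
    + field; exact ha.
    + rewrite hc; ring.
  - rewrite hsu.
    transitivity (c ^ 2 / (2 * b) * (sin t * cos (t + u) + cos t * sin (t + u) + sin t)).
    + field; exact hb.
    + rewrite hs; ring.
Qed.

(* If t_j + t_k = 2 t (mod 2 pi), the chord from angle t_j to angle t_k is
   orthogonal to the radius direction (cos t, sin t). *)
Lemma symmetric_chord (t tj tk : R) :
  full_turn (tj + tk - 2 * t) ->
  cos tk = cos tj - 2 * sin t * sin (tk - t) /\
  sin tk = sin tj + 2 * cos t * sin (tk - t).
Proof.
  intros hsym; destruct (full_turn_reflect _ (tk - t) hsym) as [hc hs].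
  replace (tj + tk - 2 * t - (tk - t)) with (tj - t) in hc, hs by ring.
  replace tj with (t + (tj - t)) by ring; replace tk with (t + (tk - t)) at 1 3 by ring.
  rewrite !cos_plus, !sin_plus, hc, hs; split; ring.
Qed.

Lemma perp_vertex_to_cusp_chord (a b c u t tj tk : R) :
  a <> 0 -> b <> 0 -> cusp_angle u t -> cusp_angle u tj -> cusp_angle u tk ->
  full_turn (tj + tk - 2 * t) ->
  perp_through (ellP a b t) (negPedal a b c u tj) (negPedal a b c u tk)
    (pscale (-1) (ellP a b u)).
Proof.
  intros ha hb ht htj htk hsym.
  destruct (symmetric_chord t tj tk hsym) as [hck hsk].
  pose proof (cusp_angle_sin u t ht) as hkey.
  rewrite (negPedal_at_cusp a b c u tj), (negPedal_at_cusp a b c u tk) by assumption.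
  unfold perp_through, pdot, psub, pscale, ellP; cbn [fst snd].
  rewrite hck, hsk.
  transitivity (3 * c ^ 2 * sin (tk - t)
                * (sin t * cos u + cos t * sin u + 2 * sin t * cos t)).
  - field; split; assumption.
  - rewrite hkey; ring.
Qed.

Lemma perp_cusp_to_side (a b c u t tj tk : R) (H : pt) :
  a <> 0 -> b <> 0 -> c ^ 2 = a ^ 2 - b ^ 2 -> cusp_angle u t ->
  full_turn (tj + tk - 2 * t) ->
  perp_through (ellP a b t) (ellP a b tj) (ellP a b tk) H ->
  perp_through (negPedal a b c u t) (ellP a b tj) (ellP a b tk)
    (psub (pscale 2 H) (ellP a b u)).
Proof.
  intros ha hb hc2 ht hsym hH.
  destruct (symmetric_chord t tj tk hsym) as [hck hsk].
  pose proof (cusp_angle_sin u t ht) as hkey.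
  rewrite (negPedal_at_cusp a b c u t) by assumption.
  destruct H as [h1 h2].
  unfold perp_through, pdot, psub, pscale, ellP in *; cbn [fst snd] in *.
  rewrite hck, hsk in *.
  match type of hH with ?altitude = 0 =>
    transitivity (2 * altitude
                  + c ^ 2 * sin (tk - t) * (sin t * cos u + cos t * sin u + 2 * sin t * cos t)
                  + 2 * sin (tk - t) * (a ^ 2 - b ^ 2 - c ^ 2)
                    * (cos t * sin u - 2 * sin t * cos t))
  end.
  - field; split; assumption.
  - rewrite hH, hkey, hc2; ring.
Qed.

Lemma tcusp_symmetric (u : R) :
  full_turn (tcusp u 2 + tcusp u 3 - 2 * tcusp u 1) /\
  full_turn (tcusp u 3 + tcusp u 1 - 2 * tcusp u 2) /\
  full_turn (tcusp u 1 + tcusp u 2 - 2 * tcusp u 3).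
Proof.
  unfold tcusp; split; [| split].
  - replace (_ + _ - _) with (- (2 * INR 1 * PI)) by (simpl; field).
    apply full_turn_opp, full_turn_multiple.
  - replace (_ + _ - _) with (2 * INR 0 * PI) by (simpl; field).
    apply full_turn_multiple.
  - replace (_ + _ - _) with (2 * INR 1 * PI) by (simpl; field).
    apply full_turn_multiple.
Qed.

Theorem theorem8p1 (a b c u : R) (H : pt) :
  a > b -> b > 0 -> c > 0 -> c ^ 2 = a ^ 2 - b ^ 2 ->
  let M := ellP a b u in
  let P1 := ellP a b (tcusp u 1) in
  let P2 := ellP a b (tcusp u 2) in
  let P3 := ellP a b (tcusp u 3) in
  let P1' := negPedal a b c u (tcusp u 1) in
  let P2' := negPedal a b c u (tcusp u 2) in
  let P3' := negPedal a b c u (tcusp u 3) in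
  is_orthocenter P1 P2 P3 H ->
  let mM := pscale (-1) M in
  let HM := psub (pscale 2 H) M in
  (perp_through P1 P2' P3' mM /\ perp_through P2 P3' P1' mM /\
   perp_through P3 P1' P2' mM) /\
  (perp_through P1' P2 P3 HM /\ perp_through P2' P3 P1 HM /\
   perp_through P3' P1 P2 HM) /\
  orthologic_with_centers P1 P2 P3 P1' P2' P3' mM HM.
Proof.
  intros hab hb _ hc2 M P1 P2 P3 P1' P2' P3' [alt1 [alt2 alt3]] mM HM.
  assert (ha : a <> 0) by lra; assert (hb0 : b <> 0) by lra.
  pose proof (tcusp_cusp_angle u 1) as c1.
  pose proof (tcusp_cusp_angle u 2) as c2.
  pose proof (tcusp_cusp_angle u 3) as c3.
  destruct (tcusp_symmetric u) as [sym1 [sym2 sym3]].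
  assert (family1 : perp_through P1 P2' P3' mM /\ perp_through P2 P3' P1' mM /\
                    perp_through P3 P1' P2' mM).
  { split; [| split]; apply perp_vertex_to_cusp_chord; assumption. }
  assert (family2 : perp_through P1' P2 P3 HM /\ perp_through P2' P3 P1 HM /\
                    perp_through P3' P1 P2 HM).
  { split; [| split]; apply perp_cusp_to_side; assumption. }
  unfold orthologic_with_centers, orthology_center; tauto.
Qed.
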